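(* Let $A\in\mathbb{Z}^{d\times n}$ have rank $d$, and let $B^{(0)}$ be the nonsingular matrix chosen in step 1 of the Basic Generalized Euclidean Algorithm. Each exchange step (the ''otherwise'' branch) replaces the current basis matrix $B$ by a matrix $B'$ with $|\det B'|\le \tfrac12|\det B|$. Consequently the algorithm performs at most $\log_2|\det B^{(0)}|$ exchange steps.
   Context: For real $y$, $\lfloor y\rceil:=\lfloor y+1/2\rfloor$. Basic Generalized Euclidean Algorithm. Input: $A=(A_1,\dots,A_n)\in\mathbb{Z}^{d\times n}$ of rank $d$. 1. Choose $d$ linearly independent columns of $A$ and let $B=(B_1,\dots,B_d)$ be the matrix they form. Let $C$ be the multiset of the remaining $n-d$ columns. 2. While $C\neq\emptyset$: - choose any $c\in C$ and compute $x\in\mathbb{Q}^d$ with $Bx=c$; - if $x\in\mathbb{Z}^d$, remove $c$ from $C$; - otherwise (exchange step) choose an index $\ell$ with $x_\ell\notin\mathbb{Z}$, remove $c$ from $C$, add the current column $B_\ell$ to $C$, and replace the column $B_\ell$ by $c-\bigl(B_\ell\lfloor x_\ell\rceil+\sum_{j\neq\ell}B_j\lfloor x_j\rfloor\bigr)$. 3. Return $B$. *)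

From HB Require Import structures.
From mathcomp Require Import all_boot all_order all_algebra.
Set Implicit Arguments. Unset Strict Implicit. Unset Printing Implicit Defensive.
Import Order.TTheory GRing.Theory Num.Theory.
Local Open Scope ring_scope.

(* A state is a pair (B, C): the current d x d integer basis matrix B and the
   multiset C of remaining columns (represented as a seq; order irrelevant). *)

Definition gea_state (d : nat) := ('M[int]_d * seq 'cV[int]_d)%type.

Definition solx (d : nat) (B : 'M[int]_d) (c : 'cV[int]_d) : 'cV[rat]_d :=
  invmx (map_mx intr B) *m map_mx intr c.

Definition round_half (y : rat) : int := Num.floor (y + 2^-1).

Definition exch_col (d : nat) (B : 'M[int]_d) (c : 'cV[int]_d) (l : 'I_d)
  : 'cV[int]_d :=
  let x := solx B c in
  c - (round_half (x l 0) *: col l B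
       + \sum_(j < d | j != l) Num.floor (x j 0) *: col j B).

Definition replace_col (d : nat) (B : 'M[int]_d) (l : 'I_d) (v : 'cV[int]_d)
  : 'M[int]_d :=
  \matrix_(i, j) (if j == l then v i 0 else B i j).

Definition gea_step (d : nat) (s s' : gea_state d) (exch : bool) : Prop :=
  exists2 c, c \in s.2 &
    let x := solx s.1 c in
    ( [/\ (forall i, x i 0 \is a Num.int), s' = (s.1, rem c s.2) & exch = false ]
    \/ exists l : 'I_d,
        [/\ ~~ (x l 0 \is a Num.int),
            s' = (replace_col s.1 l (exch_col s.1 c l), col l s.1 :: rem c s.2)
          & exch = true ]).

Inductive gea_run (d : nat) : gea_state d -> seq bool -> gea_state d -> Prop :=
| gea_run_nil s : gea_run s [::] s
| gea_run_cons s s1 s2 b ls :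
    gea_step s s1 b -> gea_run s1 ls s2 -> gea_run s (b :: ls) s2.

Definition gea_init (d n : nat) (A : 'M[int]_(d, n)) (sel : 'I_d -> 'I_n)
  : gea_state d :=
  (\matrix_(i, j) A i (sel j),
   [seq col k A | k <- enum 'I_n & k \notin codom sel]).

From HB Require Import structures.
From mathcomp Require Import all_boot all_order all_algebra.
From mathcomp Require Import lra.
Import Order.TTheory GRing.Theory Num.Theory.
Local Open Scope ring_scope.
Set Implicit Arguments. Unset Strict Implicit.

(* Over Q the new column is B z, where z = x - r and r is the integer vector of
   roundings of the solution x of B x = c.  Replacing column l of B by B z
   multiplies the determinant by z_l = x_l - round(x_l), a nonzero number of
   absolute value at most 1/2 when x_l is not an integer.  Non-exchange steps
   keep B, so along a run |det B| is divided by at least 2 per exchange step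
   and stays a nonzero integer, whence 2^k <= |det B0|. *)

Lemma round_half_dist (y : rat) : 2 * `|y - (round_half y)%:~R| <= 1.
Proof.
rewrite /round_half; have /andP[lo hi] := floor_itv (y + 2^-1).
rewrite intrD in hi; set r := (Num.floor _)%:~R in lo hi *.
have half_half : (2 : rat)^-1 = 1 - 2^-1 by rewrite {2}(splitr 1) mul1r addrK.
rewrite -ler_pdivlMl // mulr1 ler_norml; apply/andP; split; lra.
Qed.

Lemma round_half_neq (y : rat) : ~~ (y \is a Num.int) -> y - (round_half y)%:~R != 0.
Proof. by apply: contra; rewrite subr_eq0 => /eqP ->; apply: intr_int. Qed.

Lemma det_replace_col_mulmx (R : comNzRingType) d (B : 'M[R]_d) (l : 'I_d)
    (z : 'cV[R]_d) :
  \det (\matrix_(i, j) (if j == l then (B *m z) i 0 else B i j)) = \det B * z l 0.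
Proof.
pose M := \matrix_(i, j) (if j == l then z i 0 else (i == j)%:R) : 'M[R]_d.
have -> : \matrix_(i, j) (if j == l then (B *m z) i 0 else B i j) = B *m M.
  apply/matrixP => i j; rewrite !mxE; case: eqP => [->|/eqP ne_jl].
    by apply: eq_bigr => k _; rewrite !mxE eqxx.
  rewrite (bigD1 j) //= big1 ?addr0 => [|k ne_kj]; rewrite !mxE (negbTE ne_jl).
    by rewrite eqxx mulr1.
  by rewrite (negbTE ne_kj) mulr0.
rewrite det_mulmx; congr (_ * _).
rewrite (expand_det_row _ l) (bigD1 l) //= big1 ?addr0 => [|j ne_jl]; last first.
  by rewrite !mxE (negbTE ne_jl) eq_sym (negbTE ne_jl) mul0r.
rewrite !mxE eqxx /cofactor -signr_odd addnn odd_double expr0 mul1r.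
have -> : row' l (col' l M) = 1%:M.
  by apply/matrixP => i j; rewrite !mxE (inj_eq (@lift_inj _ l)) lift_eqF.
by rewrite det1 mulr1.
Qed.

Section ExchangeStep.

Variables (d : nat) (B : 'M[int]_d) (c : 'cV[int]_d) (l : 'I_d).
Hypothesis detB_neq0 : \det B != 0.

Let Bq := map_mx (intr : int -> rat) B.
Let x := solx B c.

Definition exch_residue : 'cV[rat]_d :=
  x - \col_i (if i == l then (round_half (x l 0))%:~R
              else (Num.floor (x i 0))%:~R).

Lemma map_exch_col : map_mx intr (exch_col B c l) = Bq *m exch_residue.
Proof.
have Bq_unit : Bq \in unitmx by rewrite unitmxE unitfE det_map_mx intr_eq0.
have Bq_x : Bq *m x = map_mx intr c by rewrite /x /solx mulmxA mulmxV ?mul1mx.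
rewrite /exch_residue mulmxBr Bq_x /exch_col -/x.
apply/matrixP => i j; rewrite (ord1 j) !mxE rmorphB /=; congr (_ - _).
rewrite summxE rmorphD rmorph_sum /= [RHS](bigD1 l) //= !mxE eqxx.
rewrite mulrC rmorphM /=; congr (_ + _).
by apply: eq_bigr => k ne_kl; rewrite !mxE (negbTE ne_kl) rmorphM /= mulrC.
Qed.

Lemma det_exch_step :
  ((\det (replace_col B l (exch_col B c l)))%:~R : rat) =
  (\det B)%:~R * (x l 0 - (round_half (x l 0))%:~R).
Proof.
have -> : x l 0 - (round_half (x l 0))%:~R = exch_residue l 0.
  by rewrite !mxE eqxx.
rewrite -!det_map_mx -/Bq -det_replace_col_mulmx -map_exch_col; congr (\det _).
by apply/matrixP => i j; rewrite !mxE; case: eqP.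
Qed.

End ExchangeStep.

Lemma exch_step_det d (s s' : gea_state d) :
  \det s.1 != 0 -> gea_step s s' true ->
  \det s'.1 != 0 /\ 2 * `|\det s'.1| <= `|\det s.1|.
Proof.
move=> detB_neq0 [c _] /= [[_ _ //]|[l [x_nonint -> _]]] /=.
have det_eq := det_exch_step c l detB_neq0.
split.
  by rewrite -(intr_eq0 rat) det_eq mulf_eq0 negb_or intr_eq0 detB_neq0 round_half_neq.
rewrite -(ler_int rat) intrM !intr_norm det_eq normrM mulrCA.
by rewrite -[leRHS]mulr1 ler_wpM2l ?round_half_dist.
Qed.

Lemma plain_step_basis d (s s' : gea_state d) :
  gea_step s s' false -> s'.1 = s.1.
Proof. by move=> [c _] /= [[_ -> _]|[l [_ _ //]]]. Qed.

Lemma gea_run_det d (s s' : gea_state d) ls :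
  gea_run s ls s' -> \det s.1 != 0 ->
  \det s'.1 != 0 /\ (2 ^+ count id ls)%:R * `|\det s'.1| <= `|\det s.1|.
Proof.
elim=> {s ls s'} [s|s s1 s2 [] ls step _ IH] detB_neq0; first by rewrite mul1r.
  have [det1_neq0 det1_le] := exch_step_det detB_neq0 step.
  have [det2_neq0 det2_le] := IH det1_neq0; split => //=.
  rewrite exprS natrM -mulrA; apply: le_trans det1_le.
  by rewrite ler_wpM2l.
by move: IH; rewrite (plain_step_basis step); apply.
Qed.

Theorem mainTheorem2 :
  (forall (d : nat) (s s' : gea_state d),
      \det s.1 != 0 -> gea_step s s' true ->
      2 * `|\det s'.1| <= `|\det s.1|)
  /\
  (forall (d n : nat) (A : 'M[int]_(d, n)) (sel : 'I_d -> 'I_n)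
          (ls : seq bool) (s : gea_state d),
      \rank (map_mx (intr : int -> rat) A) = d ->
      injective sel ->
      row_free (map_mx (intr : int -> rat) (gea_init A sel).1)^T ->
      gea_run (gea_init A sel) ls s ->
      (2 ^+ count id ls)%:R <= `|\det (gea_init A sel).1|).
Proof.
split=> [d s s' detB_neq0 step|d n A sel ls s _ _ B0_free run].
  by have [] := exch_step_det detB_neq0 step.
have detB0_neq0 : \det (gea_init A sel).1 != 0.
  by move: B0_free; rewrite row_free_unit unitmxE unitfE det_tr det_map_mx intr_eq0.
have [detB_neq0 det_le] := gea_run_det run detB0_neq0.
apply: le_trans det_le; rewrite -[leLHS]mulr1 ler_wpM2l //.
by rewrite -normr_gt0 in detB_neq0.
Qed.
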